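(* Consider an execution of the MBBA protocol (described in the context) and let $h>\frac23$ be the fraction of honest players among the $n$ players. Suppose that at the start of an execution of STEP 3 no player has halted (i.e. agreement on a bit vector has not yet been reached), and let $l$ be the number of components $c\in\{1,\dots,m\}$ on which $c$-agreement does not hold. Then, at the end of this STEP 3, the honest players are in agreement with probability at least $h\left(\frac12\right)^l>\frac23\left(\frac12\right)^l$.
   Context: Network model: $n$ players; every pair is joined by a direct private channel; synchronous steps, instantaneous delivery. Fewer than $n/3$ players are malicious (arbitrary behaviour); honest players follow the protocol and send the same message to every player. For player $i$, step $s$, component $c$ and value $v$, $\#_i^s(v,c)$ is the number of distinct players from which $i$ received in step $s$ a valid vector message whose $c$-th component is $v$ (counting $i$'s own); conflicting messages from one sender in one step are both discarded, duplicates count once. $c$-agreement holds if there is a value $v$ such that the $c$-th component $b_{j,c}$ of every honest player $j$'s current vector equals $v$; agreement means $c$-agreement for every $c$. Protocol MBBA: $H$ is a hash function modeled as a random oracle (outputs ordered lexicographically); $\mathrm{SIG}_i(x)$ is $i$'s signature under a unique-signature scheme (any valid signature on $x$ for $i$'s key equals $\mathrm{SIG}_i(x)$ except with negligible probability) with publicly known keys; $r$ a common random string independent of the keys; counter $\gamma$ starts at 0. Player $i$ holds $\mathbf{b}_i\in\{0,1\}^m$ and $\mathbf{f}_i$, initially all zeros. EXIT CHECK: if $\mathbf{f}_i$ is all ones, $i$ sends $\mathbf{b}_i$ marked final (treated by receivers as $i$'s message in all later steps), outputs $\mathbf{b}_i$ and halts. STEP 1: $i$ sends $\mathbf{b}_i$;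 for each $c$ with $f_{i,c}=0$: if $\#_i^1(0,c)>\frac23 n$, set $b_{i,c}=0$, $f_{i,c}=1$, perform EXIT CHECK; else if $\#_i^1(1,c)>\frac23n$, set $b_{i,c}=1$; else $b_{i,c}=0$. STEP 2: $i$ sends $\mathbf{b}_i$; for each $c$ with $f_{i,c}=0$: if $\#_i^2(1,c)>\frac23 n$, set $b_{i,c}=1$, $f_{i,c}=1$, perform EXIT CHECK; else if $\#_i^2(0,c)>\frac23n$, set $b_{i,c}=0$; else $b_{i,c}=1$. STEP 3: $i$ sends $s_i=\mathrm{SIG}_i(r\|\gamma)$ and $\mathbf{b}_i$; for each $c$ with $f_{i,c}=0$: if $\#_i^3(0,c)>\frac23n$, $b_{i,c}=0$; else if $\#_i^3(1,c)>\frac23n$, $b_{i,c}=1$; else $b_{i,c}=k_c$, the $c$-th bit of $k=H(\min_{j\in P_i}H(s_j))$ where $P_i$ is the set of players who sent $i$ a valid STEP 3 message. Then $\gamma\leftarrow\gamma+1$ and return to STEP 1. *)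

From mathcomp Require Import all_boot all_order all_algebra.
Set Implicit Arguments. Unset Strict Implicit. Unset Printing Implicit Defensive.
Import Order.TTheory GRing.Theory Num.Theory.

(* Messages of one step: [adv j i] is the (valid) vector message the malicious
   player j delivers to player i, or [None] if j delivers no valid message
   (conflicting messages are discarded, hence also [None]). *)
Definition msgs (n m : nat) := 'I_n -> 'I_n -> option ('I_m -> bool).

Record state (n m : nat) := State {
  sb : 'I_n -> 'I_m -> bool;
  sf : 'I_n -> 'I_m -> bool;
  shalt : 'I_n -> bool }.

Section Protocol.
Variables (n m : nat) (hon : {set 'I_n}).

(* message delivered by j to i: honest players send their current vector
   (a halted honest player's final vector, which is its current vector) *)
Definition deliv (s : state n m) (adv : msgs n m) (j i : 'I_n) :=
  if j \in hon then Some (sb s j) else adv j i.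

Definition cnt (s : state n m) (adv : msgs n m) (i : 'I_n) (c : 'I_m) (v : bool) :=
  #|[set j : 'I_n | if deliv s adv j i is Some x then x c == v else false]|.

Definition over23 (k : nat) := 2 * n < 3 * k.

Definition active (s : state n m) (i : 'I_n) := (i \in hon) && ~~ shalt s i.

Definition step12 (z : bool) (s : state n m) (adv : msgs n m) : state n m :=
  let fixes i c := [&& active s i, ~~ sf s i c & over23 (cnt s adv i c z)] in
  let nb i c :=
    if active s i && ~~ sf s i c then
      (if over23 (cnt s adv i c z) then z
       else if over23 (cnt s adv i c (~~ z)) then ~~ z else z)
    else sb s i c in
  let nf i c := sf s i c || fixes i c in
  let nh i := shalt s i || ([exists c, fixes i c] && [forall c, nf i c]) in
  State nb nf nh.

Definition step1 := step12 false.
Definition step2 := step12 true.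

(* STEP 3.  [u j] is H(s_j) (hash outputs, lexicographically ordered, modelled
   by 'I_N), [G x] is H(x) restricted to its first m bits. *)
Definition step3 (N : nat) (s : state n m) (u : 'I_n -> 'I_N)
    (G : 'I_N -> 'I_m -> bool) (adv : msgs n m) : state n m :=
  let sig j i := if j \in hon then ~~ shalt s j else (if adv j i is Some _ then true else false) in
  let P i := [set j | sig j i] in
  let k i := G (u [arg min_(j < i in P i) u j]) in
  let nb i c :=
    if active s i && ~~ sf s i c then
      (if over23 (cnt s adv i c false) then false
       else if over23 (cnt s adv i c true) then true else k i c)
    else sb s i c in
  State nb (sf s) (shalt s).

Definition init (b0 : 'I_n -> 'I_m -> bool) : state n m :=
  State b0 (fun _ _ => false) (fun _ => false).

(* states reachable at the start of some STEP 3 of an execution, for arbitrary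
   inputs, arbitrary malicious behaviour and arbitrary past random-oracle values *)
Inductive reach3 (N : nat) : state n m -> Prop :=
| reach3_first b0 a1 a2 : reach3 N (step2 (step1 (init b0) a1) a2)
| reach3_next s u G a3 a1 a2 : reach3 N s ->
    reach3 N (step2 (step1 (@step3 N s u G a3) a1) a2).

Definition cagree (b : 'I_n -> 'I_m -> bool) (c : 'I_m) :=
  [exists v : bool, [forall j in hon, b j c == v]].
Definition agree (b : 'I_n -> 'I_m -> bool) := [forall c, cagree b c].

End Protocol.

(* probability space of the fresh random-oracle values used in the STEP 3 *)
Definition Omega (n m N : nat) :=
  ({ffun 'I_n -> 'I_N} * {ffun 'I_N -> {ffun 'I_m -> bool}})%type.

Definition prob (T : finType) (A : {set T}) : rat := #|A|%:R / #|T|%:R.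

(* A component that
   some honest player has fixed is already unanimous among honest players and
   stays so.  On a split component, a supermajority for 0 in some tally forces
   coin_target to be false and one for 1 forces it to be true, so every honest
   player ends on coin_target as soon as its coin bit equals coin_target.  All
   honest players use the same coin whenever the smallest hash H(s_j) is an
   honest player's, since honest signatures reach everybody; by rotating the
   hash values this happens with probability at least h.  Independently, the
   oracle value at that hash matches coin_target on the l split components with
   probability 2^-l, whatever the malicious players send. *)

From mathcomp Require Import all_boot all_order all_algebra zify.
Import Order.TTheory GRing.Theory Num.Theory.
Set Implicit Arguments. Unset Strict Implicit.

Section Voting.
Variables (n m : nat) (hon : {set 'I_n}).
Hypothesis honest_supermajority : 3 * #|~: hon| < n.

Definition honest_votes (b : 'I_n -> 'I_m -> bool) (c : 'I_m) (v : bool) :=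
  #|[set j in hon | b j c == v]|.

Lemma honest_votesN b c v : honest_votes b c v + honest_votes b c (~~ v) = #|hon|.
Proof.
rewrite /honest_votes -(cardsID [set j | b j c == v] hon); congr (_ + _); apply: eq_card => j.
  by rewrite !inE andbC.
by rewrite !inE andbC; case: v; case: (b j c).
Qed.

Lemma honest_votes_le_cnt (s : state n m) adv i c v :
  honest_votes (sb s) c v <= cnt hon s adv i c v.
Proof.
apply: subset_leq_card; apply/subsetP => j.
by rewrite !inE /deliv => /andP[-> ->].
Qed.

Lemma cnt_le_honest_votes (s : state n m) adv i c v :
  cnt hon s adv i c v <= honest_votes (sb s) c v + #|~: hon|.
Proof.
apply: leq_trans (leq_card_setU _ _); apply: subset_leq_card; apply/subsetP => j.
by rewrite !inE /deliv; case: (j \in hon) => //= ->.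
Qed.

(* Two supermajorities for opposite values would need more than [4n/3] votes,
   but honest players vote once and at most [n/3] malicious ones vote twice. *)
Lemma over23_excl b c v k k' :
  k <= honest_votes b c v + #|~: hon| ->
  k' <= honest_votes b c (~~ v) + #|~: hon| ->
  over23 n k -> ~~ over23 n k'.
Proof.
have := honest_votesN b c v; have := cardsC hon; rewrite card_ord /over23.
move: honest_supermajority; lia.
Qed.

Lemma over23_cnt_excl (s : state n m) adv i i' c v :
  over23 n (cnt hon s adv i c v) -> ~~ over23 n (cnt hon s adv i' c (~~ v)).
Proof. by apply: over23_excl; apply: cnt_le_honest_votes. Qed.

Lemma over23_cnt_unanimous (s : state n m) adv i c v :
  (forall j, j \in hon -> sb s j c = v) -> over23 n (cnt hon s adv i c v).
Proof.
move=> unan; have hv : honest_votes (sb s) c v = #|hon|.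
  apply: eq_card => j; rewrite !inE.
  by case: (boolP (j \in hon)) => hj /=; rewrite ?unan ?eqxx.
have := honest_votes_le_cnt s adv i c v; have := cardsC hon; rewrite card_ord hv /over23.
move: honest_supermajority; lia.
Qed.

Lemma tally_unanimous (s : state n m) adv i c v z d :
  (forall j, j \in hon -> sb s j c = v) ->
  (if over23 n (cnt hon s adv i c z) then z
   else if over23 n (cnt hon s adv i c (~~ z)) then ~~ z else d) = v.
Proof.
move=> /(over23_cnt_unanimous adv i) ov.
have nov := over23_cnt_excl i ov.
by case: z; case: v ov nov => /= ov nov; rewrite ?ov ?(negbTE nov).
Qed.

Lemma step12_unanimous z (s : state n m) adv c v j :
  (forall j, j \in hon -> sb s j c = v) -> j \in hon ->
  sb (step12 hon z s adv) j c = v.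
Proof.
move=> unan hj /=; case: ifP => _; last exact: unan.
exact: tally_unanimous.
Qed.

Lemma step3_unanimous N (s : state n m) u G adv c v j :
  (forall j, j \in hon -> sb s j c = v) -> j \in hon ->
  sb (@step3 n m hon N s u G adv) j c = v.
Proof.
move=> unan hj /=; case: ifP => _; last exact: unan.
exact: (tally_unanimous _ _ false).
Qed.

Definition sound_state (s : state n m) := forall c,
  (forall j, j \in hon -> shalt s j -> sf s j c) /\
  (forall j i, j \in hon -> i \in hon -> sf s j c -> sb s i c = sb s j c).

Lemma sound_step12 z (s : state n m) adv :
  sound_state s -> sound_state (step12 hon z s adv).
Proof.
move=> ok c; split.
  move=> j hj /= /orP[/(proj1 (ok c) j hj) -> // | /andP[_ /forallP]]; exact.
move=> j i hj hi fixed.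
have [/exists_inP[x hx fx] | nofix] := boolP [exists x in hon, sf s x c].
  have unan y : y \in hon -> sb s y c = sb s x c by move=> hy; exact: (proj2 (ok c)).
  by rewrite !(step12_unanimous z adv unan).
have unfixed y : y \in hon -> sf s y c = false.
  by move=> hy; apply: negbTE; apply: contra nofix => fy; apply/exists_inP; exists y.
have act y : y \in hon -> active hon s y.
  move=> hy; rewrite /active hy; apply: contraFN (unfixed y hy); exact: (proj1 (ok c)).
(* [c] is first fixed now, by [j] seeing a supermajority for [z]; this rules
   out a supermajority for [~~ z] in every tally, so all honest players pick [z]. *)
have ovj : over23 n (cnt hon s adv j c z) by move: fixed; rewrite /= unfixed // => /and3P[].
have to_z y : y \in hon -> sb (step12 hon z s adv) y c = z.
  move=> hy /=; rewrite act // unfixed //=.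
  by case: ifP => // _; rewrite (negbTE (over23_cnt_excl y ovj)).
by rewrite !to_z.
Qed.

Lemma sound_step3 N (s : state n m) u G adv :
  sound_state s -> sound_state (@step3 n m hon N s u G adv).
Proof.
move=> ok c; split; first exact: (proj1 (ok c)).
move=> j i hj hi fixed.
have unan y : y \in hon -> sb s y c = sb s j c by move=> hy; exact: (proj2 (ok c)).
by rewrite !(step3_unanimous u G adv unan).
Qed.

Lemma sound_reach3 N (s : state n m) : reach3 hon N s -> sound_state s.
Proof.
by elim=> [b0 a1 a2 | s' u G a3 a1 a2 _ ok];
  do 2 apply: sound_step12; [by [] | apply: sound_step3].
Qed.

(* The only coin value that no honest tally of STEP 3 can contradict. *)
Definition coin_target (s : state n m) (c : 'I_m) :=
  over23 n (honest_votes (sb s) c true + #|~: hon|).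

Lemma tally_coin_target (s : state n m) adv i c :
  (if over23 n (cnt hon s adv i c false) then false
   else if over23 n (cnt hon s adv i c true) then true else coin_target s c)
  = coin_target s c.
Proof.
case: ifP => [ov0 | _].
  by apply/esym/negbTE; apply: (over23_excl (v := false)) ov0 => //;
    apply: cnt_le_honest_votes.
case: ifP => // ov1; apply/esym; apply: leq_trans ov1 _.
by rewrite leq_mul2l cnt_le_honest_votes.
Qed.

Lemma step3_agree N (s : state n m) (u : 'I_n -> 'I_N) G adv j0 :
  sound_state s -> (forall j, j \in hon -> ~~ shalt s j) ->
  j0 \in hon -> (forall k, u j0 <= u k) ->
  (forall c, ~~ cagree hon (sb s) c -> G (u j0) c = coin_target s c) ->
  agree hon (sb (step3 hon s u G adv)).
Proof.
move=> ok awake hj0 umin Gtarget; apply/forallP => c.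
have [/existsP[v /forall_inP unan] | split_c] := boolP (cagree hon (sb s) c).
  apply/existsP; exists v; apply/forall_inP => x hx.
  by apply/eqP; apply: step3_unanimous hx => j /unan /eqP.
apply/existsP; exists (coin_target s c); apply/forall_inP => x hx /=.
have unfixed : ~~ sf s x c.
  apply: contra split_c => fx; apply/existsP; exists (sb s x c).
  by apply/forall_inP => y hy; rewrite (proj2 (ok c) x y).
rewrite /active hx awake // unfixed /=; apply/eqP.
case: arg_minnP => [|j _ ujmin]; first by rewrite inE hx awake.
have -> : u j = u j0 by apply/val_inj/eqP; rewrite eqn_leq umin ujmin // inE hj0 awake.
by rewrite Gtarget // tally_coin_target.
Qed.

End Voting.

Definition min_attained_in (I : finType) N (H : {set I}) : {set {ffun I -> 'I_N}} :=
  [set u : {ffun I -> 'I_N} | [exists j in H, [forall k, u j <= u k]]].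

Lemma sum_card_rel (T1 T2 : finType) (R : T1 -> T2 -> bool) :
  \sum_x #|[set y | R x y]| = \sum_y #|[set x | R x y]|.
Proof.
rewrite (eq_bigr (fun x => \sum_y R x y)) => [|x _]; last first.
  by rewrite -sum1dep_card [LHS]big_mkcond; apply: eq_bigr => y _; case: (R x y).
rewrite exchange_big; apply: eq_bigr => y _.
by rewrite -sum1dep_card [RHS]big_mkcond; apply: eq_bigr => x _; case: (R x y).
Qed.

(* Rotating the indices of [u] by [p - j], where [p] is a minimiser of [u],
   moves the minimum to [j]: each [u] has at least [#|H|] rotations whose
   minimum is attained in [H]. *)
Lemma card_min_attained_in (I : finZmodType) N (H : {set I}) :
  #|H| * N ^ #|I| <= #|I| * #|min_attained_in N H|.
Proof.
set A := min_attained_in N H.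
pose rot (r : I) (u : {ffun I -> 'I_N}) := [ffun j => u (j + r)%R].
have rot_inj r : injective (rot r).
  by move=> u1 u2 /ffunP e; apply/ffunP => j; have := e (j - r)%R; rewrite !ffunE subrK.
have hits u : #|H| <= #|[set r | rot r u \in A]|.
  have [p _ pmin] := arg_minnP (fun j => nat_of_ord (u j)) (isT : predT 0%R).
  have sub_inj : injective (fun j : I => p - j)%R.
    by apply: (can_inj (g := fun j => p - j)%R) => j; rewrite opprB addrC subrK.
  rewrite -(card_imset H sub_inj); apply: subset_leq_card; apply/subsetP => _ /imsetP[j hj ->].
  rewrite !inE; apply/exists_inP; exists j => //; apply/forallP => k.
  by rewrite !ffunE addrC subrK pmin.
have -> : #|H| * N ^ #|I| = \sum_(u : {ffun I -> 'I_N}) #|H|.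
  by rewrite sum_nat_const card_ffun !card_ord mulnC.
have -> : #|I| * #|A| = \sum_u #|[set r | rot r u \in A]|.
  rewrite (sum_card_rel (fun u r => rot r u \in A)) /=.
  rewrite (eq_bigr (fun _ => #|A|)) => [|r _]; last exact: card_preimset.
  by rewrite sum_nat_const.
by apply: leq_sum => u _; apply: hits.
Qed.

Local Open Scope ring_scope.

Lemma prob_subset (T : finType) (A B : {set T}) : A \subset B -> prob A <= prob B.
Proof. by move=> AB; rewrite /prob ler_wpM2r ?invr_ge0 ?ler0n // ler_nat subset_leq_card. Qed.

Lemma prob_pairs (T1 T2 : finType) (A : {set T1}) (B : T1 -> {set T2}) p :
  (forall x, x \in A -> prob (B x) = p) ->
  prob [set w : T1 * T2 | (w.1 \in A) && (w.2 \in B w.1)] = prob A * p.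
Proof.
move=> pB.
have card_pairs : #|[set w : T1 * T2 | (w.1 \in A) && (w.2 \in B w.1)]|
    = (\sum_(x in A) #|B x|)%N.
  rewrite (eq_bigr (fun x => \sum_(y in B x) 1)%N) => [|x _]; last by rewrite sum1_card.
  by rewrite pair_big_dep /= -sum1_card; apply: eq_bigl => w; rewrite inE.
rewrite /prob card_pairs card_prod mulnC natr_sum natrM invfM mulrA mulr_suml.
rewrite (eq_bigr (fun _ => p)) => [|x xA]; last exact: pB.
by rewrite sumr_const -[p *+ _]mulr_natl mulrAC.
Qed.

Lemma prob_family (aT Y : finType) (F : aT -> {set Y}) :
  prob [set f : {ffun aT -> Y} | [forall x, f x \in F x]] = \prod_x prob (F x).
Proof.
rewrite /prob; have -> : #|[set f : {ffun aT -> Y} | [forall x, f x \in F x]]|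
    = #|family (fun x => [pred y | y \in F x])|.
  by apply: eq_card => f; rewrite inE; apply/forallP/familyP.
rewrite card_family foldrE big_image card_ffun -prod_nat_const !natr_prod.
by rewrite -prodf_div.
Qed.

Lemma prob_setT (T : finType) : (0 < #|T|)%N -> prob [set: T] = 1.
Proof. by move=> T0; rewrite /prob cardsT divff // pnatr_eq0 -lt0n. Qed.

Lemma prob_ffun_at (aT Y : finType) (x : aT) (T : {set Y}) :
  prob [set f : {ffun aT -> Y} | f x \in T] = prob T.
Proof.
have -> : [set f : {ffun aT -> Y} | f x \in T]
    = [set f : {ffun aT -> Y} | [forall y, f y \in if y == x then T else setT]].
  apply/setP => f; rewrite !inE; apply/idP/forallP => [fx y | /(_ x)]; last by rewrite eqxx.
  by case: eqP => [-> | _]; rewrite ?inE.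
rewrite prob_family (bigD1 x) //= eqxx.
have [Y0 | Ypos] := posnP #|Y|; first by rewrite /prob Y0 invr0 mulr0 mul0r.
by rewrite big1 ?mulr1 // => y /negbTE ->; apply: prob_setT.
Qed.

Lemma prob_ffun_eq_on (aT Y : finType) (D : {set aT}) (g : aT -> Y) :
  (0 < #|Y|)%N ->
  prob [set f : {ffun aT -> Y} | [forall x in D, f x == g x]] = #|Y|%:R^-1 ^+ #|D|.
Proof.
move=> Ypos; have -> : [set f : {ffun aT -> Y} | [forall x in D, f x == g x]]
    = [set f : {ffun aT -> Y} | [forall x, f x \in if x \in D then [set g x] else setT]].
  by apply/setP => f; rewrite !inE; apply/eq_forallb => x; case: (x \in D); rewrite ?inE.
rewrite prob_family (bigID [in D]) /= [X in _ * X]big1 ?mulr1; last first.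
  by move=> x /negbTE ->; apply: prob_setT.
rewrite (eq_bigr (fun _ => #|Y|%:R^-1)) ?prodr_const // => x ->.
by rewrite /prob cards1 div1r.
Qed.

Lemma prob_min_attained_in (I : finZmodType) N (H : {set I}) :
  (0 < N)%N -> #|H|%:R / #|I|%:R <= prob (min_attained_in N H).
Proof.
move=> N_gt0; have I_gt0 : (0 < #|I|)%N by apply/card_gt0P; exists 0.
rewrite /prob card_ffun card_ord ler_pdivrMr ?ltr0n ?expn_gt0 ?N_gt0 //.
rewrite mulrAC ler_pdivlMr ?ltr0n ?expn_gt0 ?N_gt0 // -!natrM ler_nat.
by rewrite [(_ * #|I|)%N]mulnC card_min_attained_in.
Qed.

Lemma prob_eval_at_min (I Y : finType) N (H : {set I}) (T : {set Y}) u :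
  u \in min_attained_in N H ->
  prob [set G : {ffun 'I_N -> Y} |
          [exists j0 in H, [forall k, (u j0 <= u k)%N] && (G (u j0) \in T)]] = prob T.
Proof.
rewrite inE => /exists_inP[j1 hj1 /forallP u1min].
rewrite -(prob_ffun_at (u j1) T); apply: congr1; apply/setP => G; rewrite !inE.
apply/exists_inP/idP => [[j0 _ /andP[/forallP u0min]] | GT].
  by have -> : u j1 = u j0 by apply/val_inj/eqP; rewrite eqn_leq u0min u1min.
by exists j1 => //; rewrite GT andbT; apply/forallP.
Qed.

Lemma two_thirds_lt_honest n (hon : {set 'I_n}) :
  (3 * #|~: hon| < n)%N -> 2 / 3 < #|hon|%:R / n%:R :> rat.
Proof.
move=> supermaj; have n_gt0 : (0 < n)%N by case: n hon supermaj.
rewrite ltr_pdivlMr ?ltr0n // mulrAC ltr_pdivrMr // -!natrM ltr_nat.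
have := cardsC hon; rewrite card_ord; lia.
Qed.

Theorem lemma3 (n m N : nat) (hon : {set 'I_n}) (s : state n m)
    (adv : Omega n m N -> msgs n m) :
  (0 < N)%N ->
  (3 * #|~: hon| < n)%N ->
  reach3 hon N s ->
  (forall j, j \in hon -> ~~ shalt s j) ->
  let l := #|[set c : 'I_m | ~~ cagree hon (sb s) c]| in
  let h : rat := #|hon|%:R / n%:R in
  h * (1/2) ^+ l <=
    prob [set w : Omega n m N |
           agree hon (sb (step3 hon s (fun j => w.1 j) (fun x c => w.2 x c) (adv w)))]
  /\ 2/3 * (1/2) ^+ l < h * (1/2) ^+ l.
Proof.
case: n hon s adv => [|n] hon s adv N_gt0 supermaj reach awake l h.
  by rewrite ltn0 in supermaj.
set E := [set w | _].
set T := [set f : {ffun 'I_m -> bool} | [forall c in [set c | ~~ cagree hon (sb s) c],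
                                          f c == coin_target hon s c]].
set A := min_attained_in N hon.
pose B (u : {ffun 'I_n.+1 -> 'I_N}) := [set G : {ffun 'I_N -> {ffun 'I_m -> bool}} |
  [exists j0 in hon, [forall k, (u j0 <= u k)%N] && (G (u j0) \in T)]].
have agreeing : [set w | (w.1 \in A) && (w.2 \in B w.1)] \subset E.
  apply/subsetP => -[u G]; rewrite !inE => /andP[_ /exists_inP[j0 hj0 /andP[/forallP umin]]].
  rewrite inE => /forall_inP GT.
  apply: (step3_agree supermaj _ (sound_reach3 supermaj reach) awake hj0 umin) => c split_c.
  by apply/eqP/GT; rewrite inE.
have fibre u : u \in A -> prob (B u) = (1/2) ^+ l.
  by move=> /prob_eval_at_min ->; rewrite prob_ffun_eq_on card_bool // div1r.
split; last by rewrite ltr_pM2r ?exprn_gt0 // two_thirds_lt_honest.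
apply: le_trans (prob_subset agreeing); rewrite (prob_pairs fibre) ler_wpM2r ?exprn_ge0 //.
by have := prob_min_attained_in hon N_gt0; rewrite card_ord.
Qed.
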